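(* Let t₁ and t₂ be regular terms in the language of strong quasi-Wajsberg* algebras. Then the equation t₁ ≈ t₂ holds in all strong quasi-Wajsberg* algebras iff it holds in all Wajsberg* algebras.
   Context: A quasi-Wajsberg* algebra is an algebra ⟨W; →, ¬, ⁺, ⁻, 1⟩ of type ⟨2,1,1,1,0⟩ satisfying: x→y = ¬y→¬x; (x→1)→((y→1)→z) = (y→1)→((x→1)→z); (1→x)→1 = 1; (z→z)→(x→y) = x→y; (1→1)→x⁺ = ((1→1)→x)⁺ = (x→1)→1 and (1→1)→x⁻ = ((1→1)→x)⁻ = (x→¬1)→¬1; x→y = (y⁺→x⁻)→(x⁺→y⁻); ¬(x→y) = y→x; ¬¬x = x; (x→(¬x→y))⁺ = x⁺→(¬x⁺→y⁺); x∨y = y∨x; x∨(y∨z) = (x∨y)∨z; x→(y∨z) = (x→y)∨(x→z); where x∨y = ((x⁺→y⁺)⁺→(¬x)⁻)→((y⁻→x⁻)⁻→x⁻). A strong quasi-Wajsberg* algebra is a quasi-Wajsberg* algebra satisfying x⁺ = (1→1)→x⁺ and x⁻ = (1→1)→x⁻ for all x. A Wajsberg* algebra is an algebra ⟨M; →, ¬, 1⟩ satisfying the analogous axioms with (y→y)→x = x in place of (z→z)→(x→y) = x→y, where x⁺ = (x→1)→1 and x⁻ = (x→¬1)→¬1; every Wajsberg* algebra is a strong quasi-Wajsberg* algebra. A term in the language of strong quasi-Wajsberg* algebras (built from variables, →, ¬, 1) is called regular if it contains → or 1; the non-regular terms are exactly ¬ⁿp with p a variable and n ≥ 0. *)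

Set Implicit Arguments.

Inductive term : Type :=
| tvar : nat -> term
| timp : term -> term -> term
| tneg : term -> term
| tone : term.

Fixpoint regular (t : term) : bool :=
  match t with
  | tvar _ => false
  | timp _ _ => true
  | tneg u => regular u
  | tone => true
  end.

Record qWalg : Type := QWAlg {
  qcar :> Type;
  qimp : qcar -> qcar -> qcar;
  qneg : qcar -> qcar;
  qplus : qcar -> qcar;
  qminus : qcar -> qcar;
  qone : qcar
}.
Arguments qimp {q} _ _.
Arguments qneg {q} _.
Arguments qplus {q} _.
Arguments qminus {q} _.
Arguments qone {q}.

Definition qjoin {A : qWalg} (x y : A) : A :=
  qimp (qimp (qplus (qimp (qplus x) (qplus y))) (qminus (qneg x)))
       (qimp (qminus (qimp (qminus y) (qminus x))) (qminus x)).

Definition is_quasi_Wajsberg_star (A : qWalg) : Prop :=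
  let imp := @qimp A in let neg := @qneg A in
  let pl := @qplus A in let mi := @qminus A in let one := @qone A in
  let join := @qjoin A in
  (forall x y : A, imp x y = imp (neg y) (neg x)) /\
  (forall x y z : A, imp (imp x one) (imp (imp y one) z)
                     = imp (imp y one) (imp (imp x one) z)) /\
  (forall x : A, imp (imp one x) one = one) /\
  (forall x y z : A, imp (imp z z) (imp x y) = imp x y) /\
  (forall x : A, imp (imp one one) (pl x) = pl (imp (imp one one) x)) /\
  (forall x : A, pl (imp (imp one one) x) = imp (imp x one) one) /\
  (forall x : A, imp (imp one one) (mi x) = mi (imp (imp one one) x)) /\
  (forall x : A, mi (imp (imp one one) x) = imp (imp x (neg one)) (neg one)) /\
  (forall x y : A, imp x y = imp (imp (pl y) (mi x)) (imp (pl x) (mi y))) /\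
  (forall x y : A, neg (imp x y) = imp y x) /\
  (forall x : A, neg (neg x) = x) /\
  (forall x y : A, pl (imp x (imp (neg x) y)) = imp (pl x) (imp (neg (pl x)) (pl y))) /\
  (forall x y : A, join x y = join y x) /\
  (forall x y z : A, join x (join y z) = join (join x y) z) /\
  (forall x y z : A, imp x (join y z) = join (imp x y) (imp x z)).

Definition is_strong_quasi_Wajsberg_star (A : qWalg) : Prop :=
  is_quasi_Wajsberg_star A /\
  (forall x : A, qplus x = qimp (qimp qone qone) (qplus x)) /\
  (forall x : A, qminus x = qimp (qimp qone qone) (qminus x)).

Record Walg : Type := WAlg {
  wcar :> Type;
  wimp : wcar -> wcar -> wcar;
  wneg : wcar -> wcar;
  wone : wcar
}.
Arguments wimp {w} _ _.
Arguments wneg {w} _.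
Arguments wone {w}.

Definition wplus {M : Walg} (x : M) : M := wimp (wimp x wone) wone.
Definition wminus {M : Walg} (x : M) : M := wimp (wimp x (wneg wone)) (wneg wone).

Definition qW_of_W (M : Walg) : qWalg :=
  @QWAlg M (@wimp M) (@wneg M) (@wplus M) (@wminus M) (@wone M).

(** The Wajsberg* axioms: the quasi-Wajsberg* axioms (for the defined + and -),
    with (y -> y) -> x = x in place of (z -> z) -> (x -> y) = x -> y. *)
Definition is_Wajsberg_star (M : Walg) : Prop :=
  let A := qW_of_W M in
  let imp := @qimp A in let neg := @qneg A in
  let pl := @qplus A in let mi := @qminus A in let one := @qone A in
  let join := @qjoin A in
  (forall x y : A, imp x y = imp (neg y) (neg x)) /\
  (forall x y z : A, imp (imp x one) (imp (imp y one) z)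
                     = imp (imp y one) (imp (imp x one) z)) /\
  (forall x : A, imp (imp one x) one = one) /\
  (forall x y : A, imp (imp y y) x = x) /\
  (forall x : A, imp (imp one one) (pl x) = pl (imp (imp one one) x)) /\
  (forall x : A, pl (imp (imp one one) x) = imp (imp x one) one) /\
  (forall x : A, imp (imp one one) (mi x) = mi (imp (imp one one) x)) /\
  (forall x : A, mi (imp (imp one one) x) = imp (imp x (neg one)) (neg one)) /\
  (forall x y : A, imp x y = imp (imp (pl y) (mi x)) (imp (pl x) (mi y))) /\
  (forall x y : A, neg (imp x y) = imp y x) /\
  (forall x : A, neg (neg x) = x) /\
  (forall x y : A, pl (imp x (imp (neg x) y)) = imp (pl x) (imp (neg (pl x)) (pl y))) /\
  (forall x y : A, join x y = join y x) /\
  (forall x y z : A, join x (join y z) = join (join x y) z) /\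
  (forall x y z : A, imp x (join y z) = join (imp x y) (imp x z)).

Fixpoint qeval {A : qWalg} (v : nat -> A) (t : term) : A :=
  match t with
  | tvar n => v n
  | timp t1 t2 => qimp (qeval v t1) (qeval v t2)
  | tneg u => qneg (qeval v u)
  | tone => qone
  end.

Fixpoint weval {M : Walg} (v : nat -> M) (t : term) : M :=
  match t with
  | tvar n => v n
  | timp t1 t2 => wimp (weval v t1) (weval v t2)
  | tneg u => wneg (weval v u)
  | tone => wone
  end.

Definition holds_in_all_sqW (t1 t2 : term) : Prop :=
  forall A : qWalg, is_strong_quasi_Wajsberg_star A ->
    forall v : nat -> A, qeval v t1 = qeval v t2.

Definition holds_in_all_W (t1 t2 : term) : Prop :=
  forall M : Walg, is_Wajsberg_star M ->
    forall v : nat -> M, weval v t1 = weval v t2.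

From Stdlib Require Import ProofIrrelevance.

(* Every Wajsberg* algebra is a strong quasi-Wajsberg* algebra, which gives one
   direction.  Conversely, in a quasi-Wajsberg* algebra A the elements fixed by
   x |-> (1 -> 1) -> x form a Wajsberg* algebra R(A), and when A is strong this
   map is a homomorphism A -> R(A).  A regular term only takes fixed values, so
   its value in A is the value in R(A) of the same term under the projected
   valuation; hence regular equations valid in R(A) are valid in A. *)

Local Notation qe := (qimp qone qone).

Definition regular_elt {A : qWalg} (x : A) : Prop := qimp qe x = x.

Section RegularPart.

Context {A : qWalg} (HA : is_quasi_Wajsberg_star A).

Lemma imp_regular (x y : A) : regular_elt (qimp x y).
Proof. destruct HA as (_&_&_&ax&_). apply ax. Qed.

Lemma one_regular : regular_elt (@qone A).
Proof. destruct HA as (_&_&ax&_). apply ax. Qed.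

Lemma qe_imp_neg (x : A) : qimp qe (qneg x) = qneg (qimp qe x).
Proof.
  destruct HA as (contra&_&_&_&_&_&_&_&_&neg_imp&_).
  assert (neg_qe : qneg (qe : A) = qe) by apply neg_imp.
  rewrite neg_imp, (contra x qe), neg_qe. reflexivity.
Qed.

Lemma neg_regular (x : A) : regular_elt x -> regular_elt (qneg x).
Proof. unfold regular_elt; intro Rx. rewrite qe_imp_neg, Rx. reflexivity. Qed.

Lemma qplus_regular (x : A) :
  regular_elt x -> qplus x = qimp (qimp x qone) qone.
Proof. destruct HA as (_&_&_&_&_&ax&_). intro Rx. rewrite <- ax, Rx. reflexivity. Qed.

Lemma qminus_regular (x : A) :
  regular_elt x -> qminus x = qimp (qimp x (qneg qone)) (qneg qone).
Proof.
  destruct HA as (_&_&_&_&_&_&_&ax&_). intro Rx. rewrite <- ax, Rx. reflexivity.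
Qed.

Lemma qeval_regular (v : nat -> A) (t : term) :
  regular t = true -> regular_elt (qeval v t).
Proof.
  induction t as [n | t1 _ t2 _ | t IHt |]; simpl; intro Rt.
  - discriminate.
  - apply imp_regular.
  - apply neg_regular, IHt, Rt.
  - apply one_regular.
Qed.

Definition regular_part : Walg :=
  @WAlg {x : A | regular_elt x}
    (fun a b => exist _ (qimp (proj1_sig a) (proj1_sig b)) (imp_regular _ _))
    (fun a => exist _ (qneg (proj1_sig a)) (neg_regular _ (proj2_sig a)))
    (exist _ qone one_regular).

Local Notation val := (@proj1_sig A regular_elt).

Lemma val_inj (a b : regular_part) : val a = val b -> a = b.
Proof.
  destruct a, b; simpl; intros; subst; f_equal; apply proof_irrelevance.
Qed.

Lemma val_imp (a b : regular_part) : val (wimp a b) = qimp (val a) (val b).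
Proof. reflexivity. Qed.

Lemma val_neg (a : regular_part) : val (wneg a) = qneg (val a).
Proof. reflexivity. Qed.

Lemma val_one : val (@wone regular_part) = qone.
Proof. reflexivity. Qed.

Lemma val_plus (a : regular_part) : val (wplus a) = qplus (val a).
Proof. symmetry. apply qplus_regular, proj2_sig. Qed.

Lemma val_minus (a : regular_part) : val (wminus a) = qminus (val a).
Proof. symmetry. apply qminus_regular, proj2_sig. Qed.

Lemma val_join (a b : regular_part) :
  val (@qjoin (qW_of_W regular_part) a b) = qjoin (val a) (val b).
Proof.
  unfold qjoin; cbn [qimp qneg qplus qminus qone qW_of_W].
  repeat rewrite ?val_imp, ?val_neg, ?val_one, ?val_plus, ?val_minus. reflexivity.
Qed.

Lemma regular_part_Wajsberg : is_Wajsberg_star regular_part.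
Proof.
  pose proof HA as (a1&a2&a3&a4&a5&a6&a7&a8&a9&a10&a11&a12&a13&a14&a15).
  unfold is_Wajsberg_star; cbv zeta; cbn [qimp qneg qplus qminus qone qW_of_W].
  repeat split; intros; apply val_inj;
    repeat rewrite ?val_join, ?val_imp, ?val_neg, ?val_one, ?val_plus, ?val_minus;
    auto.
  (* the only axiom not inherited verbatim: (y -> y) -> x = x needs x regular *)
  destruct x as [x Rx]; simpl. rewrite <- Rx. apply a4.
Qed.

End RegularPart.

Lemma Wajsberg_strong_quasi_Wajsberg {M : Walg} :
  is_Wajsberg_star M -> is_strong_quasi_Wajsberg_star (qW_of_W M).
Proof.
  intros (a1&a2&a3&a4&a5&a6&a7&a8&a9&a10&a11&a12&a13&a14&a15).
  split; [| split; intro x; symmetry; apply a4].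
  repeat split; auto.
Qed.

Lemma qeval_qW_of_W (M : Walg) (v : nat -> M) (t : term) :
  @qeval (qW_of_W M) v t = weval v t.
Proof. induction t; simpl; congruence. Qed.

Section StrongProjection.

Context {A : qWalg} (HA : is_strong_quasi_Wajsberg_star A).

Let HqA : is_quasi_Wajsberg_star A := proj1 HA.

(* Axiom x -> y = (y+ -> x-) -> (x+ -> y-) reduces x -> y to the values of + and -,
   which in a strong algebra are unchanged by x |-> qe -> x. *)
Lemma qimp_qe_qe (a b : A) : qimp (qimp qe a) (qimp qe b) = qimp a b.
Proof.
  pose proof HA as [(_&_&_&_&plus_qe&_&minus_qe&_&split_imp&_) [plus_fix minus_fix]].
  rewrite (split_imp (qimp qe a)), (split_imp a).
  rewrite <- !plus_qe, <- !minus_qe, <- !plus_fix, <- !minus_fix. reflexivity.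
Qed.

Definition regular_proj (v : nat -> A) (n : nat) : regular_part HqA :=
  exist _ (qimp qe (v n)) (imp_regular HqA _ _).

Lemma weval_regular_proj (v : nat -> A) (t : term) :
  proj1_sig (weval (regular_proj v) t) = qimp qe (qeval v t).
Proof.
  induction t as [n | t1 IH1 t2 IH2 | t IHt |]; simpl.
  - reflexivity.
  - rewrite IH1, IH2, qimp_qe_qe. symmetry. apply (imp_regular HqA).
  - rewrite IHt. symmetry. apply (qe_imp_neg HqA).
  - symmetry. apply (one_regular HqA).
Qed.

End StrongProjection.

Theorem proposition3p7 (t1 t2 : term) :
  regular t1 = true -> regular t2 = true ->
  (holds_in_all_sqW t1 t2 <-> holds_in_all_W t1 t2).
Proof.
  intros R1 R2; split.
  - intros Hq M HM v.
    rewrite <- !qeval_qW_of_W. apply (Hq _ (Wajsberg_strong_quasi_Wajsberg HM)).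
  - intros Hw A HA v.
    rewrite <- (qeval_regular (proj1 HA) v t1 R1), <- (qeval_regular (proj1 HA) v t2 R2).
    rewrite <- !(weval_regular_proj HA).
    f_equal. apply Hw, regular_part_Wajsberg.
Qed.
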